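(* Let $\mathcal{H}$ and $\mathcal{H}'$ be two hypertrees with the same vertex set. Then they are equivalent if and only if $\mathcal{H}'$ can be obtained from $\mathcal{H}$ by a finite sequence of the following operations: removing/adding an edge with exactly one vertex; removing/adding an edge equal to the whole vertex set; adding an edge with the same vertices as an existing edge; removing an edge for which another edge with the same vertices exists; adding an edge that is the nonempty intersection of some edges; adding an edge that is the union of two non-disjoint edges; adding an edge that is the connected union of some edges; removing an edge that is the intersection of other edges; removing an edge that is the connected union of other edges.
   Context: A hypergraph has a finite vertex set and a finite family (repetitions allowed) of nonempty subsets of it (edges). A host tree is a tree on the vertex set in which every edge induces a connected subgraph; a hypertree is a hypergraph with a host tree. Hypergraphs on the same vertex set are equivalent if they have the same host trees. A union of sets is connected if the intersection graph of the sets is connected. *)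

From mathcomp Require Import all_boot.
Set Implicit Arguments. Unset Strict Implicit. Unset Printing Implicit Defensive.

(* A hypergraph on the finite vertex set V: a finite family (a sequence,
   repetitions allowed) of nonempty subsets of V. *)
Definition hypergraph (V : finType) (H : seq {set V}) : Prop :=
  all (fun e => e != set0) H.

(* A simple graph on V is given by its set of edges, each a 2-element set. *)
Definition adj (V : finType) (E : {set {set V}}) : rel V :=
  fun x y => [set x; y] \in E.

Definition is_tree (V : finType) (E : {set {set V}}) : Prop :=
  [/\ (forall e, e \in E -> #|e| = 2),
      (forall x y : V, connect (adj E) x y) &
      ~ (exists c : seq V, [/\ uniq c, 3 <= size c & cycle (adj E) c])].

Definition induces_connected (V : finType) (E : {set {set V}}) (S : {set V}) : Prop :=
  forall x y, x \in S -> y \in S ->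
    connect (fun a b => [&& a \in S, b \in S & adj E a b]) x y.

Definition host_tree (V : finType) (H : seq {set V}) (E : {set {set V}}) : Prop :=
  is_tree E /\ (forall e, e \in H -> induces_connected E e).

Definition hypertree (V : finType) (H : seq {set V}) : Prop :=
  hypergraph H /\ exists E, host_tree H E.

Definition equivalent (V : finType) (H H' : seq {set V}) : Prop :=
  forall E, host_tree H E <-> host_tree H' E.

(* the union of the family F is connected: the intersection graph of the
   sets in F is connected *)
Definition connected_family (V : finType) (F : seq {set V}) : Prop :=
  forall i j : 'I_(size F),
    connect (fun a b : 'I_(size F) => nth set0 F a :&: nth set0 F b != set0) i j.

Definition add_ok (V : finType) (H : seq {set V}) (e : {set V}) : Prop :=
  #|e| = 1 \/
  e = setT \/
  e \in H \/
  (exists F : seq {set V}, [/\ F != [::], all (mem H) F,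
       e = \bigcap_(f <- F) f & e != set0]) \/
  (exists e1 e2, [/\ e1 \in H, e2 \in H, e1 :&: e2 != set0 & e = e1 :|: e2]) \/
  (exists F : seq {set V}, [/\ F != [::], all (mem H) F,
           connected_family F & e = \bigcup_(f <- F) f]).

(* Conditions for removing the edge e, where H is the family of the other
   edges (remaining after the removal) *)
Definition remove_ok (V : finType) (H : seq {set V}) (e : {set V}) : Prop :=
  #|e| = 1 \/
  e = setT \/
  e \in H \/
  (exists F : seq {set V}, [/\ F != [::], all (mem H) F &
       e = \bigcap_(f <- F) f]) \/
  (exists F : seq {set V}, [/\ F != [::], all (mem H) F,
       connected_family F & e = \bigcup_(f <- F) f]).

(* One operation; families are multisets, i.e. sequences up to permutation *)
Inductive step (V : finType) (H : seq {set V}) : seq {set V} -> Prop :=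
  | step_add e H' : add_ok H e -> perm_eq H' (e :: H) -> step H H'
  | step_remove e H' : remove_ok H' e -> perm_eq H (e :: H') -> step H H'.

Inductive reachable (V : finType) (H : seq {set V}) : seq {set V} -> Prop :=
  | reach_refl : reachable H H
  | reach_step H1 H2 : reachable H H1 -> step H1 H2 -> reachable H H2.

From mathcomp Require Import all_boot.
Set Implicit Arguments. Unset Strict Implicit. Unset Printing Implicit Defensive.

(* Every operation preserves host trees: singletons and the whole vertex set
   are connected in any tree, and unions of intersecting subtrees and
   intersections of subtrees of a tree are again subtrees.

   Conversely, let S be an edge of H' and T a host tree of H.  For a tree
   edge [x y] inside S, the hull of [x y], i.e. the intersection of all edges
   of H containing x and y, lies inside S: a vertex w of the hull outside S
   would allow replacing [x y] by [x w] or [y w], producing a host tree of H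
   in which S is disconnected.  Hence S is the connected union of the hulls of
   the tree edges it contains.  These hulls are intersections of edges of H,
   so they can be added to H, used to add S, and removed again.  Adding all
   edges of H' in this way and then symmetrically removing those of H turns H
   into H'. *)

Section ConnectThroughEdge.
Variables (T : finType) (r r' : rel T) (a b : T).
Hypothesis r'_sub : forall u v, r' u v -> r u v \/ (u = a /\ v = b) \/ (u = b /\ v = a).

Lemma connect_through_edge p q : connect r' p q ->
  [\/ connect r p q, connect r p a /\ connect r b q | connect r p b /\ connect r a q].
Proof.
move=> /connectP[s s_path ->] {q}.
elim: s p s_path => [|y s IH] p /=; first by move=> _; constructor 1.
case/andP=> /r'_sub py /IH y_last.
case: py y_last => [py|[[-> ->]|[-> ->]]] [y_q|[y_a b_q]|[y_b a_q]].
- by constructor 1; apply: connect_trans (connect1 py) y_q.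
- by constructor 2; split => //; apply: connect_trans (connect1 py) y_a.
- by constructor 3; split => //; apply: connect_trans (connect1 py) y_b.
- by constructor 2; split; rewrite ?connect0.
- by constructor 2; split; rewrite ?connect0.
- by constructor 1.
- by constructor 3; split; rewrite ?connect0.
- by constructor 1.
- by constructor 3; split; rewrite ?connect0.
Qed.

End ConnectThroughEdge.

Section Trees.
Variable V : finType.
Implicit Types (E : {set {set V}}) (a b p q u v x y z : V).

Lemma adj_sym E : symmetric (adj E).
Proof. by move=> x y; rewrite /adj setUC. Qed.

Lemma connect_adj_sym E : connect_sym (adj E).
Proof. exact/sym_connect_sym/adj_sym. Qed.

Lemma set2_inj a b u v :
  [set a; b] = [set u; v] -> (a = u /\ b = v) \/ (a = v /\ b = u).
Proof.
move=> eq_ab_uv.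
have /set2P a_uv : a \in [set u; v] by rewrite -eq_ab_uv set21.
have /set2P b_uv : b \in [set u; v] by rewrite -eq_ab_uv set22.
have /set2P u_ab : u \in [set a; b] by rewrite eq_ab_uv set21.
have /set2P v_ab : v \in [set a; b] by rewrite eq_ab_uv set22.
by case: a_uv b_uv u_ab v_ab => [] ? [] ? [] ? [] ?; subst; auto.
Qed.

Lemma adj_setD1P E a b u v : adj E u v ->
  adj (E :\ [set a; b]) u v \/ (u = a /\ v = b) \/ (u = b /\ v = a).
Proof.
rewrite /adj in_setD1; case: eqP => [/set2_inj uv_ab _|_ ->]; by [right | left].
Qed.

Definition all_bridges E :=
  forall a b, [set a; b] \in E -> ~~ connect (adj (E :\ [set a; b])) a b.

Lemma tree_all_bridges E : is_tree E -> all_bridges E.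
Proof.
case=> card2 _ acyclic a b ab_E; apply/negP => /connectP[p p_path b_last].
have a_neq_b : a != b.
  by apply/eqP=> a_eq_b; move: (card2 _ ab_E); rewrite a_eq_b setUid cards1.
case: (shortenP p_path) b_last => -[|z [|z' s]] s_path s_uniq _ /= b_last.
- by rewrite b_last eqxx in a_neq_b.
- by move: s_path; rewrite /= -b_last /adj in_setD1 eqxx.
- apply: acyclic; exists [:: a, z, z' & s]; split => //.
  rewrite /cycle rcons_path; apply/andP; split.
    by apply: sub_path s_path => u v; rewrite /adj in_setD1 => /andP[].
  by rewrite /= -b_last adj_sym.
Qed.

Lemma all_bridges_tree E : (forall e, e \in E -> #|e| = 2) ->
  (forall x y, connect (adj E) x y) -> all_bridges E -> is_tree E.
Proof.
move=> card2 conn bridges; split=> // -[[|a [|z s]] [c_uniq c_size c_cycle]] //.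
move: c_cycle; rewrite /cycle rcons_path => /andP[/= /andP[az_E s_path] b_a].
set b := last z s in b_a.
have ab_E : [set a; b] \in E by rewrite /adj setUC in b_a.
move: c_uniq => /= /andP[]; rewrite inE negb_or.
move=> /andP[a_neq_z a_notin_s] /andP[z_notin_s _].
have avoid_ab u v : u \in z :: s -> v \in z :: s -> [set u; v] != [set a; b].
  move=> u_zs v_zs; apply/eqP => /set2_inj[[ua _]|[_ va]].
    by move: u_zs; rewrite ua inE (negbTE a_neq_z) (negbTE a_notin_s).
  by move: v_zs; rewrite va inE (negbTE a_neq_z) (negbTE a_notin_s).
apply: (negP (bridges _ _ ab_E)); apply: (connect_trans (y := z)).
  apply: connect1; rewrite /adj in_setD1 -[[set a; z] \in E]/(adj E a z) az_E andbT.
  apply/eqP => /set2_inj[[_ z_b]|[_ z_a]]; last by rewrite z_a eqxx in a_neq_z.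
  have b_in_s : b \in s.
    by rewrite /b; case: (s) c_size => // y s' _ /=; apply: mem_last.
  by rewrite -z_b in b_in_s; rewrite b_in_s in z_notin_s.
apply/connectP; exists s => //; apply: (sub_in_path (P := mem (z :: s))) s_path.
  by move=> u v u_zs v_zs uv; rewrite /adj in_setD1 avoid_ab.
exact/allP.
Qed.

Lemma tree_upath E p q : is_tree E ->
  exists s, [/\ uniq (p :: s), path (adj E) p s & q = last p s].
Proof.
case=> _ conn _; have /connectP[s s_path ->] := conn p q.
by case: (shortenP s_path) => s' s'_path s'_uniq _; exists s'.
Qed.

End Trees.

Section InducedConnectivity.
Variable V : finType.
Implicit Types (E : {set {set V}}) (S A B : {set V}) (F : seq {set V}).
Implicit Types (p q u v x y z : V).

Definition induced_adj E S : rel V := fun u v => [&& u \in S, v \in S & adj E u v].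

Lemma connect_induced_sym E S : connect_sym (induced_adj E S).
Proof.
by apply: sym_connect_sym => u v; rewrite /induced_adj adj_sym andbCA !andbA.
Qed.

Lemma connect_induced_subset E A B : A \subset B ->
  subrel (connect (induced_adj E A)) (connect (induced_adj E B)).
Proof.
move=> /subsetP sAB; apply: connect_sub => u v /and3P[uA vA uv].
by apply: connect1; rewrite /induced_adj (sAB _ uA) (sAB _ vA).
Qed.

Lemma connect_induced_path E S x s : path (adj E) x s -> all (mem S) (x :: s) ->
  connect (induced_adj E S) x (last x s).
Proof.
move=> s_path s_S; apply/connectP; exists s => //.
by apply: (sub_in_path (P := mem S)) s_S s_path => u v uS vS uv; apply/and3P.
Qed.

(* If the first edge [x y] of the path left S, the last vertex would be
   joined to x inside S and to y along the rest of the path, both avoiding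
   the bridge [x y]. *)
Lemma upath_in_connected E S x s : all_bridges E -> induces_connected E S ->
  uniq (x :: s) -> path (adj E) x s -> x \in S -> last x s \in S ->
  all (mem S) (x :: s).
Proof.
move=> bridges S_conn; elim: s x => [|y s IH] x /=; first by move=> _ _ ->.
move=> /andP[x_notin_ys ys_uniq] /andP[xy ys_path] xS lastS.
rewrite xS /=; apply: IH => //; apply/negPn/negP => y_notin_S.
have y_last : connect (adj (E :\ [set x; y])) y (last y s).
  apply/connectP; exists s => //.
  apply: (sub_in_path (P := fun u => u \in y :: s)) ys_path; last by apply/allP.
  move=> u v /= u_ys v_ys /(adj_setD1P x y)[// | [[ux _] | [_ vx]]].
  - by rewrite -ux u_ys in x_notin_ys.
  - by rewrite -vx v_ys in x_notin_ys.
have x_last : connect (adj (E :\ [set x; y])) x (last y s).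
  apply: connect_sub (S_conn _ _ xS lastS) => u v /and3P[uS vS].
  case/(adj_setD1P x y) => [/connect1 // | [[_ vy] | [uy _]]].
  - by rewrite -vy vS in y_notin_S.
  - by rewrite -uy uS in y_notin_S.
have := bridges x y xy; rewrite (connect_trans x_last) //.
by rewrite connect_adj_sym.
Qed.

Lemma induces_connected_bigcap E F : is_tree E ->
  (forall f, f \in F -> induces_connected E f) ->
  induces_connected E (\bigcap_(f <- F) f).
Proof.
move=> E_tree F_conn p q; rewrite bigcap_seq => /bigcapP pF /bigcapP qF.
have [s [s_uniq s_path q_last]] := tree_upath p q E_tree.
rewrite q_last in qF *; apply: connect_induced_path => //.
apply/allP => z zs; apply/bigcapP => f fF.
have /allP := upath_in_connected (tree_all_bridges E_tree) (F_conn f fF)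
  s_uniq s_path (pF f fF) (qF f fF).
exact.
Qed.

Lemma induces_connected_bigcup E F :
  (forall f, f \in F -> induces_connected E f) -> connected_family F ->
  induces_connected E (\bigcup_(f <- F) f).
Proof.
move=> F_conn F_family p q; rewrite bigcup_seq => /bigcupP[f fF pf] /bigcupP[g gF qg].
set U := \bigcup_(f in F) f.
have nth_U (k : 'I_(size F)) : nth set0 F k \subset U.
  by apply: (bigcup_sup (nth set0 F k)); rewrite mem_nth.
have f_lt : index f F < size F by rewrite index_mem.
have g_lt : index g F < size F by rewrite index_mem.
suff reach_p (k : 'I_(size F)) :
    connect (fun i j : 'I_(size F) => nth set0 F i :&: nth set0 F j != set0)
      (Ordinal f_lt) k ->
    forall z, z \in nth set0 F k -> connect (induced_adj E U) p z.
  by apply: (reach_p (Ordinal g_lt)); rewrite ?nth_index //; apply: F_family.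
move=> /connectP[s s_path ->] {k}; elim/last_ind: s s_path => [|s k IH] /=.
  move=> _ z; rewrite nth_index // => zf.
  apply: (connect_induced_subset (nth_U (Ordinal f_lt))).
  by rewrite /= nth_index // F_conn.
rewrite rcons_path last_rcons => /andP[s_path /set0Pn[z0 /setIP[z0_last z0_k]]] z zk.
apply: connect_trans (IH s_path _ z0_last) _.
by apply: (connect_induced_subset (nth_U k)); apply: F_conn; rewrite ?mem_nth.
Qed.

Lemma induces_connected_setT E : is_tree E -> induces_connected E setT.
Proof.
case=> _ conn _ p q _ _; rewrite (@eq_connect _ _ (adj E)) //.
by move=> u v; rewrite /= !inE.
Qed.

Lemma induces_connected_set1 E z : induces_connected E [set z].
Proof. by move=> p q /set1P -> /set1P ->; apply: connect0. Qed.

Lemma induces_connected_setU E A B : induces_connected E A -> induces_connected E B ->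
  A :&: B != set0 -> induces_connected E (A :|: B).
Proof.
move=> A_conn B_conn /set0Pn[z /setIP[zA zB]].
have to_z p : p \in A :|: B -> connect (induced_adj E (A :|: B)) p z.
  case/setUP => [pA | pB].
  - by apply: (connect_induced_subset (subsetUl A B)); apply: A_conn.
  - by apply: (connect_induced_subset (subsetUr A B)); apply: B_conn.
move=> p q pAB qAB; apply: connect_trans (to_z p pAB) _.
by rewrite connect_induced_sym to_z.
Qed.

End InducedConnectivity.

Section StepsPreserveHostTrees.
Variable V : finType.
Implicit Types (E : {set {set V}}) (e : {set V}) (F K L : seq {set V}).

Lemma add_ok_connected E K e : is_tree E ->
  (forall f, f \in K -> induces_connected E f) -> add_ok K e ->
  induces_connected E e.
Proof.
move=> E_tree K_conn.
have sub_conn F : all (mem K) F -> forall f, f \in F -> induces_connected E f.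
  by move=> /allP F_K f /F_K; apply: K_conn.
case=> [/eqP/cards1P[z ->] | [-> | [/K_conn // | [[F [_ /sub_conn F_conn -> _]] |
  [[A [B [AK BK AB ->]]] | [F [_ /sub_conn F_conn F_family ->]]]]]]].
- exact: induces_connected_set1.
- exact: induces_connected_setT.
- exact: induces_connected_bigcap.
- by apply: induces_connected_setU => //; apply: K_conn.
- exact: induces_connected_bigcup.
Qed.

Lemma remove_ok_connected E K e : is_tree E ->
  (forall f, f \in K -> induces_connected E f) -> remove_ok K e ->
  induces_connected E e.
Proof.
move=> E_tree K_conn.
have sub_conn F : all (mem K) F -> forall f, f \in F -> induces_connected E f.
  by move=> /allP F_K f /F_K; apply: K_conn.
case=> [/eqP/cards1P[z ->] | [-> | [/K_conn // | [[F [_ /sub_conn F_conn ->]] |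
  [F [_ /sub_conn F_conn F_family ->]]]]]].
- exact: induces_connected_set1.
- exact: induces_connected_setT.
- exact: induces_connected_bigcap.
- exact: induces_connected_bigcup.
Qed.

Lemma host_tree_cons E K e :
  host_tree (e :: K) E <-> host_tree K E /\ induces_connected E e.
Proof.
split=> [[E_tree K_conn] | [[E_tree K_conn] e_conn]].
  by split; [split => // f fK | ]; apply: K_conn; rewrite inE ?fK ?eqxx ?orbT.
by split => // f /predU1P[-> // | /K_conn].
Qed.

Lemma step_host_tree K L E : step K L -> host_tree K E <-> host_tree L E.
Proof.
have host_perm K' L' : perm_eq K' L' -> host_tree K' E -> host_tree L' E.
  by move=> pKL [E_tree conn]; split=> // f; rewrite -(perm_mem pKL); apply: conn.
case=> [e L' e_ok pL | e L' e_ok pK].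
- have pL' : perm_eq (e :: K) L' by rewrite perm_sym.
  split=> [[E_tree K_conn] | /(host_perm _ _ pL)/host_tree_cons[] //].
  apply: (host_perm _ _ pL'); apply/host_tree_cons; split=> //.
  exact: add_ok_connected E_tree K_conn e_ok.
- have pK' : perm_eq (e :: L') K by rewrite perm_sym.
  split=> [/(host_perm _ _ pK)/host_tree_cons[] // | [E_tree L_conn]].
  apply: (host_perm _ _ pK'); apply/host_tree_cons; split=> //.
  exact: remove_ok_connected E_tree L_conn e_ok.
Qed.

Lemma reachable_equivalent K L : reachable K L -> equivalent K L.
Proof.
elim=> [|K1 K2 _ IH K1K2] E //.
exact: iff_trans (IH E) (step_host_tree E K1K2).
Qed.

End StepsPreserveHostTrees.

Definition exchange (V : finType) (E : {set {set V}}) (x y w : V) :=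
  (E :\ [set x; y]) :|: [set [set x; w]].

Section Exchange.
Variables (V : finType) (E : {set {set V}}) (x y w : V).
Implicit Types (S f : {set V}) (a b p q u v : V).
Hypotheses (E_tree : is_tree E) (xy_E : [set x; y] \in E) (x_neq_w : x != w).
Hypothesis x_notto_w : ~~ connect (adj (E :\ [set x; y])) x w.

Local Notation Exy := (E :\ [set x; y]).
Local Notation E' := (exchange E x y w).

Lemma adj_exchange u v : adj E' u v = adj Exy u v || ([set u; v] == [set x; w]).
Proof. by rewrite /adj !inE. Qed.

Lemma connect_sub_exchange : subrel (connect (adj Exy)) (connect (adj E')).
Proof. by apply: connect_sub => u v uv; apply: connect1; rewrite adj_exchange uv. Qed.

Lemma connect_exchange_xw : connect (adj E') x w.
Proof. by apply: connect1; rewrite adj_exchange eqxx orbT. Qed.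

Lemma connect_y_w : connect (adj Exy) y w.
Proof.
case: E_tree => _ conn _.
have [xw | [_ yw] | [xy _]] //:= connect_through_edge (@adj_setD1P _ E x y) (conn x w).
- by move: x_notto_w; rewrite xw.
- by have := tree_all_bridges E_tree xy_E; rewrite xy.
Qed.

Lemma exchange_all_bridges : all_bridges E'.
Proof.
have Exy_sym := connect_adj_sym Exy.
move=> a b; rewrite in_setU in_set1 => /orP[ab_Exy | /eqP ab_xw].
  have ab_E : [set a; b] \in E by move: ab_Exy; rewrite in_setD1 => /andP[].
  have to_Exy : subrel (connect (adj (Exy :\ [set a; b]))) (connect (adj Exy)).
    by apply: connect_sub => u v; rewrite /adj in_setD1 => /andP[_ uv]; apply: connect1.
  have to_Eab :
      subrel (connect (adj (Exy :\ [set a; b]))) (connect (adj (E :\ [set a; b]))).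
    apply: connect_sub => u v; rewrite /adj !inE => /and3P[uv_ab _ uv_E].
    by apply: connect1; rewrite /adj !inE uv_ab uv_E.
  have split_xw u v : adj (E' :\ [set a; b]) u v ->
      adj (Exy :\ [set a; b]) u v \/ (u = x /\ v = w) \/ (u = w /\ v = x).
    rewrite /adj 2!in_setD1 in_setU in_set1.
    move=> /andP[uv_ab /orP[uv_Exy | /eqP/set2_inj uv_xw]]; last by right.
    by left; rewrite uv_ab.
  apply/negP => /(connect_through_edge split_xw)
    [/to_Eab | [/to_Exy a_x /to_Exy w_b] | [/to_Exy a_w /to_Exy x_b]].
  - by apply/negP; apply: tree_all_bridges.
  - move/negP: x_notto_w; apply; rewrite Exy_sym in a_x; rewrite Exy_sym in w_b.
    exact: connect_trans a_x (connect_trans (connect1 ab_Exy) w_b).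
  - move/negP: x_notto_w; apply.
    by apply: connect_trans x_b (connect_trans (connect1 _) a_w); rewrite adj_sym.
apply/negP => ab_conn; move/negP: x_notto_w; apply.
have {ab_conn} : connect (adj Exy) a b.
  apply: connect_sub ab_conn => u v; rewrite /adj in_setD1 in_setU in_set1 ab_xw.
  by case/andP => /negbTE-> /orP[uv_Exy | //]; apply: connect1.
by case: (set2_inj ab_xw) => -[-> ->] //; rewrite Exy_sym.
Qed.

Lemma exchange_tree : is_tree E'.
Proof.
case: E_tree => card2 conn _; apply: all_bridges_tree exchange_all_bridges.
  move=> e; rewrite in_setU in_set1 => /orP[/setD1P[_ /card2] // | /eqP->].
  by rewrite cards2 x_neq_w.
have x_to_y : connect (adj E') x y.
  apply: connect_trans connect_exchange_xw (connect_sub_exchange _).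
  by rewrite connect_adj_sym connect_y_w.
move=> p q; apply: connect_sub (conn p q) => u v.
case/(adj_setD1P x y) => [/connect1/connect_sub_exchange // | [[-> ->] | [-> ->]]] //.
by rewrite connect_adj_sym.
Qed.

Lemma exchange_induces_connected f : induces_connected E f ->
  (x \in f -> y \in f -> w \in f) -> induces_connected E' f.
Proof.
move=> f_conn w_f.
have Exy_E' u v : adj Exy u v -> adj E' u v by rewrite adj_exchange => ->.
have x_to_y : x \in f -> y \in f -> connect (induced_adj E' f) x y.
  move=> xf yf; have wf := w_f xf yf.
  have split_xy u v : induced_adj E f u v ->
      induced_adj Exy f u v \/ (u = x /\ v = y) \/ (u = y /\ v = x).
    by case/and3P => uf vf /(adj_setD1P x y)[uv | ]; [left; apply/and3P | right].
  have to_E' : subrel (connect (induced_adj Exy f)) (connect (induced_adj E' f)).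
    by apply: connect_sub => u v /and3P[uf vf /Exy_E' uv]; apply/connect1/and3P.
  have to_Exy : subrel (connect (induced_adj Exy f)) (connect (adj Exy)).
    by apply: connect_sub => u v /and3P[_ _ /connect1].
  apply: (connect_trans (y := w)).
    by apply: connect1; rewrite /induced_adj xf wf adj_exchange eqxx orbT.
  have [/to_E' // | [/to_Exy w_x _] | [/to_E' // _]] :=
    connect_through_edge split_xy (f_conn w y wf yf).
  by move: x_notto_w; rewrite connect_adj_sym w_x.
move=> p q pf qf; apply: connect_sub (f_conn p q pf qf) => u v /and3P[uf vf].
case/(adj_setD1P x y) => [uv | [[eu ev] | [eu ev]]]; subst.
- by apply: connect1; rewrite /induced_adj uf vf Exy_E'.
- exact: x_to_y.
- by rewrite connect_induced_sym; apply: x_to_y.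
Qed.

Lemma exchange_not_induces_connected S : x \in S -> y \in S -> w \notin S ->
  ~ induces_connected E' S.
Proof.
move=> xS yS wS S_conn; move: (tree_all_bridges E_tree xy_E); apply/negP; rewrite negbK.
apply: connect_sub (S_conn x y xS yS) => u v /and3P[uS vS]; rewrite adj_exchange.
case/orP => [/connect1 // | /eqP/set2_inj[[_ vw] | [uw _]]].
- by move: vS; rewrite vw (negbTE wS).
- by move: uS; rewrite uw (negbTE wS).
Qed.

End Exchange.

Definition hull (V : finType) (G : seq {set V}) (e : {set V}) :=
  \bigcap_(f in G | e \subset f) f.

Definition host_connected (V : finType) (G : seq {set V}) (S : {set V}) :=
  forall E, host_tree G E -> induces_connected E S.

(* A vertex w of the hull outside S would let us move the tree edge [x y] to
   [x w] (or [y w]): the result is still a host tree of G, but S is no longer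
   connected in it. *)
Lemma hull_subset (V : finType) (G : seq {set V}) E S (x y : V) :
  host_tree G E -> host_connected G S -> [set x; y] \in E -> x \in S -> y \in S ->
  hull G [set x; y] \subset S.
Proof.
move=> [E_tree G_conn] S_conn xy_E xS yS; apply/subsetP => w w_hull.
apply/negPn/negP => wS.
have {w_hull} w_f f : f \in G -> x \in f -> y \in f -> w \in f.
  by move=> fG xf yf; move/bigcapP: w_hull; apply; rewrite fG subUset !sub1set xf yf.
wlog x_notto_w : x y xy_E xS yS w_f / ~~ connect (adj (E :\ [set x; y])) x w.
  move=> exchange_at.
  have [x_to_w | ] := boolP (connect (adj (E :\ [set x; y])) x w);
    last exact: exchange_at.
  have yx_E : [set y; x] = [set x; y] by rewrite setUC.
  apply: (exchange_at y x); rewrite ?yx_E //; first by move=> f fG yf xf; apply: w_f.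
  apply: contra (tree_all_bridges E_tree xy_E) => y_to_w.
  by apply: connect_trans x_to_w _; rewrite connect_adj_sym.
have x_neq_w : x != w by apply: contraNneq wS => <-.
apply: (exchange_not_induces_connected E_tree xy_E xS yS wS (S_conn _ _)).
split; first exact: exchange_tree.
by move=> f fG; apply: exchange_induces_connected => //; [apply: G_conn | apply: w_f].
Qed.

Section HullDecomposition.
Variable V : finType.
Implicit Types (E : {set {set V}}) (S e f : {set V}) (F G : seq {set V}).
Implicit Types (u v x y z : V).

Lemma subset_hull G e : e \subset hull G e.
Proof. by apply/bigcapsP => f /andP[]. Qed.

Lemma hull_ok G e : e != set0 -> add_ok G (hull G e) /\ remove_ok G (hull G e).
Proof.
move=> e_ne; have hull_ne : hull G e != set0.
  case/set0Pn: e_ne => z ze; apply/set0Pn; exists z.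
  exact: subsetP (subset_hull G e) z ze.
have hull_eq : hull G e = \bigcap_(f <- [seq f : {set V} <- G | e \subset f]) f.
  by rewrite bigcap_seq; apply: eq_bigl => f; rewrite mem_filter andbC.
rewrite hull_eq in hull_ne *.
have G_e : all (mem G) [seq f : {set V} <- G | e \subset f].
  by apply/allP => f; rewrite mem_filter => /andP[].
case: [seq f : {set V} <- G | e \subset f] G_e hull_ne => [|f F] G_e hull_ne.
  by rewrite big_nil; split; right; left.
by split; do 3 right; left; exists (f :: F); split.
Qed.

Lemma induced_edge_through E S z : induces_connected E S -> 1 < #|S| -> z \in S ->
  exists2 e, e \in E & (z \in e) && (e \subset S).
Proof.
move=> S_conn S_gt1 zS.
have /card_gt0P[t /setD1P[t_neq_z tS]] : 0 < #|S :\ z|.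
  by move: S_gt1; rewrite (cardsD1 z S) zS add1n ltnS.
have /connectP[[|y p] /= z_path t_last] := S_conn z t zS tS.
  by rewrite t_last eqxx in t_neq_z.
case/andP: z_path => /and3P[_ yS zy] _.
by exists [set z; y] => //; rewrite set21 subUset !sub1set zS yS.
Qed.

Lemma connected_family_of_edges E S F : induces_connected E S ->
  (forall u v, induced_adj E S u v ->
     exists k : 'I_(size F), (u \in nth set0 F k) && (v \in nth set0 F k)) ->
  (forall k : 'I_(size F), exists2 z, z \in S & z \in nth set0 F k) ->
  connected_family F.
Proof.
move=> S_conn edge_in meets_S i j.
have [zi zi_S zi_i] := meets_S i; have [zj zj_S zj_j] := meets_S j.
suff reach v : connect (induced_adj E S) zi v -> forall k : 'I_(size F),
    v \in nth set0 F k ->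
    connect (fun a b : 'I_(size F) => nth set0 F a :&: nth set0 F b != set0) i k.
  exact: reach (S_conn _ _ zi_S zj_S) j zj_j.
move=> /connectP[p p_path ->] {v}; elim/last_ind: p p_path => [|p z IH] /=.
  by move=> _ k zi_k; apply: connect1; apply/set0Pn; exists zi; rewrite inE zi_i.
rewrite rcons_path last_rcons => /andP[p_path /edge_in[k0 /andP[u_k0 z_k0]]] k z_k.
apply: connect_trans (IH p_path k0 u_k0) (connect1 _).
by apply/set0Pn; exists z; rewrite inE z_k0.
Qed.

Definition inner_edges E S := [seq e : {set V} <- enum E | e \subset S].

Lemma mem_inner_edges E S e : (e \in inner_edges E S) = (e \in E) && (e \subset S).
Proof. by rewrite mem_filter mem_enum andbC. Qed.

Lemma hull_cover G E S : host_tree G E -> host_connected G S -> 1 < #|S| ->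
  S = \bigcup_(e <- inner_edges E S) hull G e.
Proof.
move=> E_host S_hosts S_gt1; have [[card2 _ _] _] := E_host.
rewrite bigcup_seq; apply/eqP; rewrite eqEsubset; apply/andP; split.
  apply/subsetP => z zS.
  have [e eE /andP[ze eS]] := induced_edge_through (S_hosts E E_host) S_gt1 zS.
  apply/bigcupP; exists e; first by rewrite mem_inner_edges eE.
  exact: subsetP (subset_hull G e) z ze.
apply/bigcupsP => e /[!mem_inner_edges] /andP[eE eS].
have /eqP/cards2P[x [y [_ e_xy]]] := card2 e eE.
move: eS; rewrite e_xy in eE *; rewrite subUset !sub1set => /andP[xS yS].
exact: hull_subset E_host S_hosts eE xS yS.
Qed.

Lemma connected_family_hulls G E S : is_tree E -> induces_connected E S ->
  connected_family (map (hull G) (inner_edges E S)).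
Proof.
move=> [card2 _ _] S_conn; set Es := inner_edges E S.
have size_Es (k : 'I_(size (map (hull G) Es))) : k < size Es.
  by rewrite -(size_map (hull G) Es) ltn_ord.
apply: (connected_family_of_edges S_conn).
  move=> u v /and3P[uS vS uv].
  have uv_Es : [set u; v] \in Es.
    by rewrite mem_inner_edges [_ \in E]uv subUset !sub1set uS vS.
  have k_lt : index [set u; v] Es < size (map (hull G) Es).
    by rewrite size_map index_mem.
  exists (Ordinal k_lt); rewrite /= (nth_map set0) ?index_mem // nth_index //.
  by apply/andP; split; apply: (subsetP (subset_hull G _)); rewrite ?set21 ?set22.
move=> k; rewrite (nth_map set0) //.
have /[!mem_inner_edges] /andP[eE eS] := mem_nth set0 (size_Es k).
have /set0Pn[z ze] : nth set0 Es k != set0 by rewrite -card_gt0 card2.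
by exists z; [apply: subsetP eS z ze | apply: subsetP (subset_hull G _) z ze].
Qed.

Lemma hull_decomposition G E S : host_tree G E -> host_connected G S -> 1 < #|S| ->
  exists2 Ms : seq {set V}, (forall m, m \in Ms -> add_ok G m /\ remove_ok G m) &
    [/\ Ms != [::], connected_family Ms & S = \bigcup_(m <- Ms) m].
Proof.
move=> E_host S_hosts S_gt1; have [E_tree _] := E_host; have [card2 _ _] := E_tree.
have S_cover : S = \bigcup_(m <- map (hull G) (inner_edges E S)) m.
  by rewrite big_map; apply: hull_cover.
exists (map (hull G) (inner_edges E S)).
  move=> m /mapP[e /[!mem_inner_edges] /andP[/card2 e2 _] ->].
  by apply: hull_ok; rewrite -card_gt0 e2.
split=> //; last exact: connected_family_hulls E_tree (S_hosts E E_host).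
by apply: contraTneq S_gt1 => Ms0; rewrite S_cover Ms0 big_nil cards0.
Qed.

End HullDecomposition.

Section Reachability.
Variable V : finType.
Implicit Types (S e : {set V}) (F G K L Ms : seq {set V}).

Lemma all_mem_subset K L F : {subset K <= L} -> all (mem K) F -> all (mem L) F.
Proof. by move=> sKL /allP F_K; apply/allP => f /F_K /sKL. Qed.

Lemma add_ok_subset K L e : {subset K <= L} -> add_ok K e -> add_ok L e.
Proof.
move=> sKL [e1|[eT|[/sKL eL|[[F [? /(all_mem_subset sKL) ? ? ?]]|
  [[A [B [/sKL ? /sKL ? ? ?]]]|[F [? /(all_mem_subset sKL) ? ? ?]]]]]]].
- by left.
- by right; left.
- by do 2 right; left.
- by do 3 right; left; exists F.
- by do 4 right; left; exists A, B.
- by do 5 right; exists F.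
Qed.

Lemma remove_ok_subset K L e : {subset K <= L} -> remove_ok K e -> remove_ok L e.
Proof.
move=> sKL [e1|[eT|[/sKL eL|[[F [? /(all_mem_subset sKL) ? ?]]|
  [F [? /(all_mem_subset sKL) ? ? ?]]]]]].
- by left.
- by right; left.
- by do 2 right; left.
- by do 3 right; left; exists F.
- by do 4 right; exists F.
Qed.

Lemma reachable_trans K L M : reachable K L -> reachable L M -> reachable K M.
Proof. by move=> KL; elim=> // L1 L2 _ KL1 L1L2; apply: reach_step KL1 L1L2. Qed.

Lemma reachable_add K e : add_ok K e -> reachable K (e :: K).
Proof. by move=> e_ok; apply: reach_step (reach_refl K) (step_add e_ok _). Qed.

Lemma reachable_remove K e : remove_ok K e -> reachable (e :: K) K.
Proof. by move=> e_ok; apply: reach_step (reach_refl _) (step_remove e_ok _). Qed.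

(* A permutation is realised by duplicating the head and removing it again. *)
Lemma reachable_perm K L : perm_eq K L -> reachable K L.
Proof.
case: K => [|e K] pKL.
  by rewrite perm_sym in pKL; move/perm_nilP: pKL => ->; apply: reach_refl.
apply: reach_step (reachable_add (e := e) _) (step_remove (e := e) _ _).
- by do 2 right; left; rewrite mem_head.
- by do 2 right; left; rewrite -(perm_mem pKL) mem_head.
- by rewrite perm_cons.
Qed.

Lemma reachable_add_all K L : (forall e, e \in L -> add_ok K e) -> reachable K (L ++ K).
Proof.
elim: L => [|e L IH] L_ok /=; first exact: reach_refl.
apply: reachable_trans (IH _) (reachable_add _) => [f fL | ].
  by apply: L_ok; rewrite inE fL orbT.
by apply: add_ok_subset (L_ok e (mem_head e L)) => f fK; rewrite mem_cat fK orbT.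
Qed.

Lemma reachable_remove_all K L :
  (forall e, e \in L -> remove_ok K e) -> reachable (L ++ K) K.
Proof.
elim: L => [|e L IH] L_ok /=; first exact: reach_refl.
apply: reachable_trans (reachable_remove _) (IH _) => [ | f fL].
  by apply: remove_ok_subset (L_ok e (mem_head e L)) => f fK; rewrite mem_cat fK orbT.
by apply: L_ok; rewrite inE fL orbT.
Qed.

Lemma reachable_add_via G K Ms S : {subset G <= K} ->
  (forall m, m \in Ms -> add_ok G m /\ remove_ok G m) -> add_ok Ms S ->
  reachable K (S :: K).
Proof.
move=> sGK Ms_ok S_ok.
have add_Ms : reachable K (Ms ++ K).
  by apply: reachable_add_all => m /Ms_ok[m_ok _]; apply: add_ok_subset sGK m_ok.
have add_S : reachable (Ms ++ K) (S :: Ms ++ K).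
  by apply: reachable_add; apply: add_ok_subset S_ok => m mMs; rewrite mem_cat mMs.
have remove_Ms : reachable (Ms ++ S :: K) (S :: K).
  apply: reachable_remove_all => m /Ms_ok[_ m_ok].
  by apply: remove_ok_subset m_ok => f /sGK fK; rewrite inE fK orbT.
apply: reachable_trans add_Ms (reachable_trans add_S _).
by apply: reachable_trans (reachable_perm _) remove_Ms; rewrite -cat1s perm_catCA.
Qed.

Lemma reachable_remove_via G K Ms S : {subset G <= K} ->
  (forall m, m \in Ms -> add_ok G m /\ remove_ok G m) -> remove_ok Ms S ->
  reachable (S :: K) K.
Proof.
move=> sGK Ms_ok S_ok.
have add_Ms : reachable (S :: K) (Ms ++ S :: K).
  apply: reachable_add_all => m /Ms_ok[m_ok _].
  by apply: add_ok_subset m_ok => f /sGK fK; rewrite inE fK orbT.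
have remove_S : reachable (S :: Ms ++ K) (Ms ++ K).
  apply: reachable_remove; apply: remove_ok_subset S_ok => m mMs.
  by rewrite mem_cat mMs.
have remove_Ms : reachable (Ms ++ K) K.
  by apply: reachable_remove_all => m /Ms_ok[_ m_ok]; apply: remove_ok_subset sGK m_ok.
apply: reachable_trans add_Ms (reachable_trans _ (reachable_trans remove_S remove_Ms)).
by apply: reachable_perm; rewrite -cat1s perm_catCA.
Qed.

End Reachability.

Section HostConnectedFamilies.
Variable V : finType.
Implicit Types (S : {set V}) (G K L : seq {set V}).

Lemma host_connected_decomposition G S : (exists E, host_tree G E) ->
  host_connected G S -> S != set0 ->
  exists2 Ms : seq {set V}, (forall m, m \in Ms -> add_ok G m /\ remove_ok G m) &
    add_ok Ms S /\ remove_ok Ms S.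
Proof.
move=> [E E_host] S_hosts S_ne; have [S_le1 | S_gt1] := leqP #|S| 1.
  have S1 : #|S| = 1 by apply/eqP; rewrite eqn_leq S_le1 card_gt0.
  by exists [::] => //; split; left.
have [Ms Ms_ok [Ms_ne Ms_family S_cup]] := hull_decomposition E_host S_hosts S_gt1.
have Ms_Ms : all (mem Ms) Ms by apply/allP.
by exists Ms => //; split; [do 5 right | do 4 right]; exists Ms.
Qed.

Lemma reachable_add_family G K L : {subset G <= K} -> (exists E, host_tree G E) ->
  (forall S, S \in L -> S != set0 /\ host_connected G S) -> reachable K (L ++ K).
Proof.
move=> sGK G_host; elim: L => [|S L IH] L_ok /=; first exact: reach_refl.
have [S_ne S_hosts] := L_ok S (mem_head S L).
have [Ms Ms_ok [S_add _]] := host_connected_decomposition G_host S_hosts S_ne.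
apply: reachable_trans (IH _) (reachable_add_via _ Ms_ok S_add) => [T TL | f /sGK fK].
  by apply: L_ok; rewrite inE TL orbT.
by rewrite mem_cat fK orbT.
Qed.

Lemma reachable_remove_family G K L : {subset G <= K} -> (exists E, host_tree G E) ->
  (forall S, S \in L -> S != set0 /\ host_connected G S) -> reachable (L ++ K) K.
Proof.
move=> sGK G_host; elim: L => [|S L IH] L_ok /=; first exact: reach_refl.
have [S_ne S_hosts] := L_ok S (mem_head S L).
have [Ms Ms_ok [_ S_remove]] := host_connected_decomposition G_host S_hosts S_ne.
apply: reachable_trans (reachable_remove_via _ Ms_ok S_remove) (IH _).
  by move=> f /sGK fK; rewrite mem_cat fK orbT.
by move=> T TL; apply: L_ok; rewrite inE TL orbT.
Qed.

End HostConnectedFamilies.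

Theorem mainTheorem7 (V : finType) (H H' : seq {set V}) :
  hypertree H -> hypertree H' ->
  (equivalent H H' <-> reachable H H').
Proof.
move=> [H_ne H_host] [H'_ne H'_host].
split=> [equiv_HH' | /reachable_equivalent //].
have H'_ok S : S \in H' -> S != set0 /\ host_connected H S.
  by move=> SH'; split=> [|E /equiv_HH'[_]]; [apply: (allP H'_ne) | apply].
have H_ok S : S \in H -> S != set0 /\ host_connected H' S.
  by move=> SH; split=> [|E /equiv_HH'[_]]; [apply: (allP H_ne) | apply].
apply: reachable_trans (reachable_add_family (K := H) _ H_host H'_ok) _ => //.
apply: reachable_trans (reachable_perm (L := H ++ H') _) _; first by rewrite perm_catC.
exact: reachable_remove_family H'_host H_ok.
Qed.
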